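(* Let $a$, $b$ and $d>1$ be pairwise coprime odd positive integers and let $\beta\geq 2$ be an integer. Then there exists a positive integer $k$ with $2^\beta d\mid(a^k+b^k)$ if and only if $2^\beta\mid(a+b)$ and $2\,\|\,\operatorname{ord}_p(\frac ab)$ for every prime $p$ dividing $d$. In this case, $\operatorname{ord}_{2^\beta}(\frac ab)=2$ and $2\,\|\,\operatorname{ord}_{2^\beta d}(\frac ab)$.
   Context: For $n$ coprime to $ab$, $\operatorname{ord}_n(\frac ab)$ denotes the multiplicative order of $ab^{-1}$ modulo $n$. $2\,\|\,m$ means $2\mid m$ and $4\nmid m$. *)

From mathcomp Require Import all_boot.
Set Implicit Arguments. Unset Strict Implicit. Unset Printing Implicit Defensive.

Definition mod_inv (n b : nat) : nat :=
  find (fun x => b * x %% n == 1 %% n) (iota 0 n).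

(* Multiplicative order of x modulo n: the least k >= 1 with x^k = 1 (mod n).
   The search runs over 1..n, which suffices whenever x is a unit mod n
   (the order divides totient n <= n). *)
Definition ord_mod (n x : nat) : nat :=
  (find (fun k => x ^ k.+1 %% n == 1 %% n) (iota 0 n)).+1.

Definition ordq (n a b : nat) : nat := ord_mod n (a * mod_inv n b).

Definition exactly2 (m : nat) : bool := (2 %| m) && ~~ (4 %| m).

From mathcomp Require Import all_boot all_algebra cyclic.
From mathcomp Require Import ring zify.

(* Put c := a b^-1 mod n, so that n | a^k + b^k iff c^k = -1 (mod n).  If this
   holds with k odd and n > 2, then ord_n(c) divides 2k but not k, so 2 || ord_n(c);
   and k must be odd since a^k + b^k = 2 (mod 4) for even k.  Conversely, if
   ord_p(c) = 2 m_p with m_p odd, then p | a^m_p + b^m_p, hence p | a^M + b^M for the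
   odd M = prod m_p.  For odd q the identity
   X^q + Y^q = (X + Y) (q Y^(q-1) + (X + Y) t)
   lifts divisibility by p to divisibility by the prime powers in d, giving
   d | a^(M d) + b^(M d), while 2^beta | a + b | a^(M d) + b^(M d).  The same
   identity shows 2^beta | a + b when 2^beta | a^k + b^k with k odd, since its
   second factor is then odd. *)

Set Implicit Arguments.
Unset Strict Implicit.
Unset Printing Implicit Defensive.

Import GRing.Theory.

Lemma totient_leq n : totient n <= n.
Proof.
rewrite totient_count_coprime.
apply: leq_trans (_ : _ <= \sum_(0 <= i < n) 1) _.
  by apply: leq_sum => i _; exact: leq_b1.
by rewrite sum_nat_const_nat muln1 subn0.
Qed.

Lemma find_iotaP (P : pred nat) n x : x < n -> P x ->
  [/\ find P (iota 0 n) <= x, P (find P (iota 0 n))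
    & forall y, y < find P (iota 0 n) -> ~~ P y].
Proof.
move=> lt_xn Px.
have hasP : has P (iota 0 n) by apply/hasP; exists x; rewrite ?mem_iota.
have lt_find : find P (iota 0 n) < n by rewrite -[n in _ < n](size_iota 0) -has_find.
split.
- rewrite leqNgt; apply/negP => lt_x_find.
  by have := before_find 0 lt_x_find; rewrite nth_iota ?Px //; lia.
- by have := nth_find 0 hasP; rewrite nth_iota.
- move=> y lt_y_find.
  have lt_yn : y < n by lia.
  by have := before_find 0 lt_y_find; rewrite nth_iota ?add0n // => ->.
Qed.

Lemma coprime_gt0 x n : 1 < n -> coprime x n -> 0 < x.
Proof. by case: x => //; rewrite /coprime gcd0n => n_gt1 /eqP n1; rewrite n1 in n_gt1. Qed.

Section OrdMod.

Variables n x : nat.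
Hypotheses (n_gt0 : 0 < n) (coprime_xn : coprime x n).

Lemma mod_invP : x * mod_inv n x = 1 %[mod n].
Proof.
have lt_wit : x ^ (totient n).-1 %% n < n by rewrite ltn_mod.
have inv_wit : x * (x ^ (totient n).-1 %% n) %% n == 1 %% n.
  by rewrite modnMmr -expnS prednK ?totient_gt0 //; apply/eqP/Euler_exp_totient.
by have [_ /eqP] := find_iotaP (P := fun y => x * y %% n == 1 %% n) lt_wit inv_wit.
Qed.

Lemma ord_mod_spec :
  x ^ ord_mod n x = 1 %[mod n] /\
  forall j, 0 < j < ord_mod n x -> x ^ j != 1 %[mod n].
Proof.
have lt_wit : (totient n).-1 < n.
  by have := totient_leq n; have := totient_gt0 n; rewrite n_gt0; lia.
have ord_wit : x ^ (totient n).-1.+1 %% n == 1 %% n.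
  by rewrite prednK ?totient_gt0 //; apply/eqP/Euler_exp_totient.
have [_ /eqP expn_ord min] :=
  find_iotaP (P := fun k => x ^ k.+1 %% n == 1 %% n) lt_wit ord_wit.
split=> // j /andP[j_gt0 lt_j]; rewrite -(prednK j_gt0); apply: min.
by rewrite /ord_mod in lt_j; lia.
Qed.

Lemma ord_mod_dvdn j : (ord_mod n x %| j) = (x ^ j == 1 %[mod n]).
Proof.
have [expn_ord min] := ord_mod_spec.
rewrite {2}(divn_eq j (ord_mod n x)) expnD (mulnC (j %/ _)) expnM.
rewrite -modnMml -modnXm expn_ord modnXm exp1n modnMml mul1n /dvdn.
have [-> | rem_gt0] := posnP (j %% ord_mod n x); first by rewrite eqxx.
by apply/esym/negbTE/min; rewrite rem_gt0 ltn_pmod.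
Qed.

Lemma ord_mod_dvd_double k : 1 < n -> n %| x ^ k + 1 -> ord_mod n x %| k * 2.
Proof.
move=> n_gt1 dvd_xk; rewrite ord_mod_dvdn eqn_mod_dvd ?expn_gt0 ?(coprime_gt0 n_gt1) //.
by rewrite expnM -{2}(exp1n 2) subn_sqr dvdn_mull.
Qed.

Lemma ord_mod_exactly2 k :
  2 < n -> odd k -> n %| x ^ k + 1 -> exactly2 (ord_mod n x).
Proof.
move=> n_gt2 odd_k dvd_xk.
have ord_dvd_2k := ord_mod_dvd_double (ltnW n_gt2) dvd_xk.
have ord_ndvd_k : ~~ (ord_mod n x %| k).
  rewrite ord_mod_dvdn; apply: contraL dvd_xk => /eqP xk1.
  by rewrite /dvdn -modnDml xk1 modnDml modn_small.
apply/andP; split.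
  apply: contraR ord_ndvd_k; rewrite dvdn2 negbK -coprimen2 => coprime_ord2.
  by rewrite -(Gauss_dvdl _ coprime_ord2).
apply: contraL odd_k => dvd4_ord.
by rewrite -dvdn2 -(dvdn_pmul2r (isT : 0 < 2)) (dvdn_trans dvd4_ord).
Qed.

Lemma ord_mod_eq2 : 2 < n -> n %| x + 1 -> ord_mod n x = 2.
Proof.
move=> n_gt2 dvd_x1.
have /andP[two_dvd_ord _] : exactly2 (ord_mod n x).
  by apply: (@ord_mod_exactly2 1); rewrite ?expn1.
apply/eqP; rewrite eqn_dvd two_dvd_ord andbT.
by apply: (@ord_mod_dvd_double 1); rewrite ?expn1 //; apply: ltnW.
Qed.

Lemma prime_dvd_expn_half_ord_addn1 :
  prime n -> 2 %| ord_mod n x -> n %| x ^ (ord_mod n x)./2 + 1.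
Proof.
move=> prime_n two_dvd_ord.
have [expn_ord min] := ord_mod_spec.
have ord_double : ord_mod n x = (ord_mod n x)./2 * 2.
  by rewrite -divn2 divnK.
set m := (ord_mod n x)./2 in ord_double *.
have x_gt0 := coprime_gt0 (prime_gt1 prime_n) coprime_xn.
have m_gt0 : 0 < m by have : 0 < ord_mod n x by []; lia.
have : n %| (x ^ m) ^ 2 - 1 ^ 2.
  by rewrite exp1n -expnM -ord_double -eqn_mod_dvd ?expn_gt0 ?x_gt0 //; exact/eqP.
rewrite subn_sqr Euclid_dvdM // -eqn_mod_dvd ?expn_gt0 ?x_gt0 //.
suff /negbTE -> : x ^ m != 1 %[mod n] by [].
by apply: min; rewrite m_gt0 ord_double; lia.
Qed.

End OrdMod.

Section Quotient.

Variables n a b : nat.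
Hypotheses (n_gt0 : 0 < n) (coprime_an : coprime a n) (coprime_bn : coprime b n).

Let c := a * mod_inv n b.

Lemma coprime_quot : coprime c n.
Proof.
rewrite coprimeMl coprime_an.
have : coprime (b * mod_inv n b) n by rewrite -coprime_modl mod_invP // coprime_modl coprime1n.
by rewrite coprimeMl => /andP[].
Qed.

Lemma dvdn_quot_expn_addn1 k : (n %| c ^ k + 1) = (n %| a ^ k + b ^ k).
Proof.
have coprime_nbk : coprime n (b ^ k) by rewrite coprime_sym coprimeXl.
rewrite -(Gauss_dvdl _ coprime_nbk) mulnDl mul1n expnMn -mulnA -expnMn.
by rewrite /dvdn -modnDml -modnMmr -modnXm (mulnC _ b) mod_invP // modnXm exp1n
  modnMmr muln1 modnDml.
Qed.

Lemma ordq_exactly2 k : 2 < n -> odd k -> n %| a ^ k + b ^ k -> exactly2 (ordq n a b).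
Proof.
rewrite -dvdn_quot_expn_addn1; exact: ord_mod_exactly2 n_gt0 coprime_quot k.
Qed.

Lemma ordq_eq2 : 2 < n -> n %| a + b -> ordq n a b = 2.
Proof.
move=> n_gt2; rewrite -[a + b]/(a ^ 1 + b ^ 1) -dvdn_quot_expn_addn1 expn1.
exact: (ord_mod_eq2 n_gt0 coprime_quot n_gt2).
Qed.

Lemma prime_dvd_expn_half_ordq :
  prime n -> 2 %| ordq n a b -> n %| a ^ (ordq n a b)./2 + b ^ (ordq n a b)./2.
Proof.
move=> prime_n two_dvd; rewrite -dvdn_quot_expn_addn1.
exact: (prime_dvd_expn_half_ord_addn1 n_gt0 coprime_quot prime_n two_dvd).
Qed.

End Quotient.

Section RingIdentities.
Local Open Scope ring_scope.

Lemma exprD_expansion (R : comNzRingType) (x y : R) n :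
  exists t, (x + y) ^+ n.+1 = x ^+ n.+1 + n.+1%:R * x ^+ n * y + y ^+ 2 * t.
Proof.
elim: n => [|n [t IH]].
  by exists 0; rewrite mulr0 addr0 expr0 mulr1 mul1r !expr1.
exists (n.+1%:R * x ^+ n + (x + y) * t).
rewrite exprS IH !exprS.
ring.
Qed.

Lemma odd_exprD_factor (R : comNzRingType) (x y : R) q : odd q ->
  exists t, x ^+ q + y ^+ q = (x + y) * (q%:R * y ^+ q.-1 + (x + y) * t).
Proof.
case: q => // j /= odd_j1.
have [t expand] := exprD_expansion (- y) (x + y) j.
have sign_j : (-1) ^+ j = 1 :> R by rewrite -signr_odd (negbTE odd_j1).
exists t; move: expand.
rewrite addrCA addNr addr0 (exprNn y j.+1) (exprNn y j) (exprS (-1) j) sign_j => ->.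
ring.
Qed.

End RingIdentities.

Lemma odd_expn_addn_factor (X Y q : nat) : odd q -> exists t : int,
  Posz (X ^ q + Y ^ q) = (Posz (X + Y) * (Posz (q * Y ^ q.-1) + Posz (X + Y) * t))%R.
Proof.
move=> odd_q; have [t E] := odd_exprD_factor X%:Z Y%:Z odd_q.
by exists t; rewrite !PoszD !PoszM -!natz !natrX !natz E natz.
Qed.

Lemma dvdn_odd_expn_addn X Y q : odd q -> X + Y %| X ^ q + Y ^ q.
Proof.
move=> /(odd_expn_addn_factor X Y) [t E].
by rewrite -[_ %| _]/(Posz (X + Y) %| Posz (X ^ q + Y ^ q))%Z E dvdz_mulr.
Qed.

Lemma dvdn_expn_addn_odd_mul X Y m q : odd q -> X ^ m + Y ^ m %| X ^ (m * q) + Y ^ (m * q).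
Proof. by rewrite !expnM; apply: dvdn_odd_expn_addn. Qed.

Lemma dvdn_odd_expn_addn_mul X Y q : odd q -> q %| X + Y -> q * (X + Y) %| X ^ q + Y ^ q.
Proof.
move=> /(odd_expn_addn_factor X Y) [t E] q_dvd.
rewrite -[_ %| _]/(Posz (q * (X + Y)) %| Posz (X ^ q + Y ^ q))%Z E (PoszM q (X + Y)) mulrC.
apply: dvdz_mul => //; apply: rpredD; last exact: dvdz_mulr.
by rewrite PoszM dvdz_mulr.
Qed.

Lemma pow2_dvdn_odd_expn_addn e X Y q :
  odd X -> odd Y -> odd q -> 2 ^ e %| X ^ q + Y ^ q -> 2 ^ e %| X + Y.
Proof.
move=> odd_X odd_Y odd_q; have [t E] := odd_expn_addn_factor X Y odd_q.
set u := (_ + _ * t)%R in E.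
have two_dvd_XY : 2 %| X + Y by rewrite dvdn2 oddD odd_X odd_Y.
have odd_u : odd `|u|%N.
  suff : ~~ (2 %| u)%Z by rewrite dvdzE dvdn2 negbK.
  rewrite rpredDr ?dvdz_mulr // -[(_ %| _)%Z]/(2 %| q * Y ^ q.-1).
  by rewrite dvdn2 negbK oddM odd_q oddX odd_Y orbT.
have coprime_u : coprime (2 ^ e) `|u| by apply: coprimeXl; rewrite coprime2n.
move=> dvd_pow; have : (Posz (2 ^ e) %| Posz (X ^ q + Y ^ q))%Z by rewrite dvdzE.
by rewrite E dvdzE abszM /= Gauss_dvdl.
Qed.

Lemma dvdn_expn_self_addn X Y n : odd n ->
  (forall p, prime p -> p %| n -> p %| X + Y) -> n %| X ^ n + Y ^ n.
Proof.
elim/ltn_ind: n => n IH odd_n prime_dvd.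
have [n_le1 | n_gt1] := leqP n 1.
  by have -> : n = 1 by case: n n_le1 odd_n {IH prime_dvd} => [|[]].
have p_prime := pdiv_prime n_gt1; set p := pdiv n in p_prime.
have n_eq : n = n %/ p * p by rewrite divnK ?pdiv_dvd.
set n' := n %/ p in n_eq.
have /andP[odd_n' odd_p] : odd n' && odd p by rewrite -oddM -n_eq.
have dvd_n' : n' %| X ^ n' + Y ^ n'.
  apply: IH => [|//|q q_prime q_dvd]; first by rewrite ltn_Pdiv ?prime_gt1 //; lia.
  by apply: prime_dvd; rewrite // n_eq dvdn_mulr.
have p_dvd : p %| X ^ n' + Y ^ n'.
  exact: dvdn_trans (prime_dvd p p_prime (pdiv_dvd n)) (dvdn_odd_expn_addn X Y odd_n').
rewrite n_eq !expnM (mulnC n').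
apply: dvdn_trans (dvdn_odd_expn_addn_mul odd_p p_dvd).
by rewrite dvdn_pmul2l ?prime_gt0.
Qed.

Lemma odd_of_dvd4_expn_addn X Y k : odd X -> odd Y -> 4 %| X ^ k + Y ^ k -> odd k.
Proof.
move=> odd_X odd_Y; apply: contraLR => even_k.
have -> : k = k./2 * 2 by rewrite -{1}(odd_double_half k) (negbTE even_k) muln2.
have : odd (X ^ k./2) && odd (Y ^ k./2) by rewrite !oddX odd_X odd_Y !orbT.
case/andP; rewrite !expnM; move: (X ^ _) (Y ^ _) => u v odd_u odd_v.
have := odd_double_half u; have := odd_double_half v; rewrite odd_u odd_v.
move: u./2 v./2 => x y; nia.
Qed.

Lemma odd_half_exactly2 m : exactly2 m -> odd m./2.
Proof.
case/andP => two_dvd four_ndvd; apply: contraR four_ndvd => even_half.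
by rewrite -(divnK two_dvd) divn2 -[4]/(2 * 2) dvdn_pmul2r // dvdn2.
Qed.

Section Proposition.

Variables a b d beta : nat.
Hypotheses (odd_a : odd a) (odd_b : odd b) (odd_d : odd d) (d_gt1 : 1 < d).
Hypotheses (coprime_ad : coprime a d) (coprime_bd : coprime b d) (beta_ge2 : 2 <= beta).

Lemma dvdn_expn_addn_spec k : 2 ^ beta * d %| a ^ k + b ^ k ->
  [/\ odd k, 2 ^ beta %| a + b
    & forall p, prime p -> p %| d -> exactly2 (ordq p a b)].
Proof.
move=> dvd_k.
have dvd_pow2 : 2 ^ beta %| a ^ k + b ^ k := dvdn_trans (dvdn_mulr d (dvdnn _)) dvd_k.
have odd_k : odd k.
  apply: odd_of_dvd4_expn_addn odd_a odd_b (dvdn_trans _ dvd_pow2).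
  by rewrite -[4]/(2 ^ 2) dvdn_exp2l.
split => // [|p p_prime p_dvd]; first exact: pow2_dvdn_odd_expn_addn odd_a odd_b odd_k dvd_pow2.
have p_gt2 : 2 < p.
  rewrite ltn_neqAle prime_gt1 // andbT; apply: contraTneq p_dvd => <-.
  by rewrite dvdn2 odd_d.
apply: (ordq_exactly2 (prime_gt0 p_prime) _ _ p_gt2 odd_k).
- exact: coprime_dvdr p_dvd coprime_ad.
- exact: coprime_dvdr p_dvd coprime_bd.
- exact: dvdn_trans p_dvd (dvdn_trans (dvdn_mull _ (dvdnn d)) dvd_k).
Qed.

Lemma exists_dvdn_expn_addn :
  2 ^ beta %| a + b -> (forall p, prime p -> p %| d -> exactly2 (ordq p a b)) ->
  exists k, 0 < k /\ 2 ^ beta * d %| a ^ k + b ^ k.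
Proof.
move=> dvd_ab ord_exactly2.
set M := \prod_(p <- primes d) (ordq p a b)./2.
have odd_M : odd M.
  rewrite /M big_seq; apply: (big_ind odd) => // [m m' odd_m odd_m' | p].
    by rewrite oddM odd_m.
  by rewrite mem_primes => /and3P[p_prime _ p_dvd]; apply/odd_half_exactly2/ord_exactly2.
have p_dvd_M : forall p, prime p -> p %| d -> p %| a ^ M + b ^ M.
  move=> p p_prime p_dvd; have /andP[two_dvd _] := ord_exactly2 p p_prime p_dvd.
  have half_dvd_M : (ordq p a b)./2 %| M.
    by rewrite /M (big_rem p) ?dvdn_mulr // mem_primes p_prime p_dvd (ltnW d_gt1).
  have odd_quot : odd (M %/ (ordq p a b)./2).
    by move: odd_M; rewrite -{1}(divnK half_dvd_M) oddM => /andP[].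
  rewrite -(divnK half_dvd_M) mulnC.
  apply: dvdn_trans (dvdn_expn_addn_odd_mul _ _ _ odd_quot).
  exact: (prime_dvd_expn_half_ordq (prime_gt0 p_prime) (coprime_dvdr p_dvd coprime_ad)
    (coprime_dvdr p_dvd coprime_bd) p_prime two_dvd).
exists (M * d); split; first by rewrite muln_gt0 odd_gt0 ?odd_gt0.
rewrite Gauss_dvd ?coprimeXl ?coprime2n //; apply/andP; split.
  by apply: dvdn_trans dvd_ab (dvdn_odd_expn_addn _ _ _); rewrite oddM odd_M.
by rewrite !expnM; apply: dvdn_expn_self_addn odd_d p_dvd_M.
Qed.

End Proposition.

Theorem proposition2p7 (a b d beta : nat) :
  0 < a -> 0 < b -> odd a -> odd b -> odd d -> 1 < d ->
  coprime a b -> coprime a d -> coprime b d -> 2 <= beta ->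
  ((exists k, 0 < k /\ 2 ^ beta * d %| a ^ k + b ^ k) <->
     (2 ^ beta %| a + b /\
      forall p, prime p -> p %| d -> exactly2 (ordq p a b)))
  /\
  ((exists k, 0 < k /\ 2 ^ beta * d %| a ^ k + b ^ k) ->
     ordq (2 ^ beta) a b = 2 /\ exactly2 (ordq (2 ^ beta * d) a b)).
Proof.
move=> _ _ odd_a odd_b odd_d d_gt1 _ coprime_ad coprime_bd beta_ge2.
have dvd_spec := dvdn_expn_addn_spec odd_a odd_b odd_d coprime_ad coprime_bd beta_ge2.
have pow2_gt2 : 2 < 2 ^ beta by rewrite -(expn1 2) ltn_exp2l.
have coprime_pow2 x : odd x -> coprime x (2 ^ beta).
  by move=> odd_x; rewrite coprime_sym coprimeXl // coprime2n.
split; [split|].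
- by case=> k [_ /dvd_spec[]].
- by case; exact: exists_dvdn_expn_addn odd_d d_gt1 coprime_ad coprime_bd.
- case=> k [_ dvd_k]; have [odd_k dvd_ab _] := dvd_spec k dvd_k; split.
    exact: ordq_eq2 (ltnW (ltnW pow2_gt2)) (coprime_pow2 a odd_a) (coprime_pow2 b odd_b)
      pow2_gt2 dvd_ab.
  apply: (ordq_exactly2 _ _ _ _ odd_k dvd_k).
  + by rewrite muln_gt0 expn_gt0 (ltnW d_gt1).
  + by rewrite coprimeMr coprime_pow2.
  + by rewrite coprimeMr coprime_pow2.
  + by rewrite (leq_trans pow2_gt2) // leq_pmulr // (ltnW d_gt1).
Qed.
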